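(* Let $k\ge2$, $n\ge1$ be integers, let $\bar{\mathcal{P}}\in\mathbb{R}^{[k,n]}$ be a columnwise-substochastic tensor, $\mathbf{v}\in\mathbb{R}^n$ a stochastic vector and $\alpha\in[0,1)$. Define $\mathcal{P}\in\mathbb{R}^{[k,n]}$ by $p_{ii_2\dots i_k}:=\bar p_{ii_2\dots i_k}+v_i\left(1-\sum_{\ell=1}^n\bar p_{\ell i_2\dots i_k}\right)$. If a nonnegative vector $\mathbf{y}$ solves the MLPPR system $(\mathbf{e}^T\mathbf{y})^{k-2}\mathbf{y}-\alpha\bar{\mathcal{P}}\mathbf{y}^{k-1}=\mathbf{v}$, then $\mathbf{y}$ solves the homogeneous MPR equation $$\mathbf{y}(\mathbf{e}^T\mathbf{y})^{k-2}=\alpha\mathcal{P}\mathbf{y}^{k-1}+(1-\alpha)\mathbf{v}(\mathbf{e}^T\mathbf{y})^{k-1},\quad\mathbf{y}\in\mathbb{R}^n_+.$$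
   Context: For $\mathcal{P}\in\mathbb{R}^{[k,n]}$ (real tensors of order $k$, dimension $n$) and $\mathbf{y}\in\mathbb{R}^n$, $(\mathcal{P}\mathbf{y}^{k-1})_i=\sum_{i_2,\dots,i_k}p_{i i_2\dots i_k}y_{i_2}\cdots y_{i_k}$. $\bar{\mathcal{P}}$ is columnwise-substochastic if its entries are nonnegative and $\sum_{i}\bar p_{i i_2\dots i_k}\le1$ for all $i_2,\dots,i_k$. $\mathbf{e}$ is the all-ones vector; a stochastic vector is nonnegative with entries summing to $1$. *)

From mathcomp Require Import all_boot all_order all_algebra.
Set Implicit Arguments. Unset Strict Implicit. Unset Printing Implicit Defensive.
Import Order.TTheory GRing.Theory Num.Theory.
Local Open Scope ring_scope.

(* A real tensor of order k and dimension n: entry p_{i i_2 ... i_k} is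
   P i idx where idx : {ffun 'I_k.-1 -> 'I_n} lists (i_2, ..., i_k). *)
Definition tensor (R : Type) (k n : nat) := 'I_n -> {ffun 'I_k.-1 -> 'I_n} -> R.

Definition tapply (R : numFieldType) (k n : nat) (P : tensor R k n)
  (y : 'I_n -> R) : 'I_n -> R :=
  fun i => \sum_(idx : {ffun 'I_k.-1 -> 'I_n}) P i idx * \prod_(j < k.-1) y (idx j).

Definition col_substochastic (R : numFieldType) (k n : nat) (P : tensor R k n) :=
  (forall i idx, 0 <= P i idx) /\ (forall idx, \sum_(i < n) P i idx <= 1).

Definition stochastic (R : numFieldType) (n : nat) (v : 'I_n -> R) :=
  (forall i, 0 <= v i) /\ \sum_(i < n) v i = 1.

Definition esum (R : numFieldType) (n : nat) (y : 'I_n -> R) := \sum_(i < n) y i.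

Definition stoch_fix (R : numFieldType) (k n : nat) (Pb : tensor R k n)
  (v : 'I_n -> R) : tensor R k n :=
  fun i idx => Pb i idx + v i * (1 - \sum_(l < n) Pb l idx).

From mathcomp Require Import all_boot all_order all_algebra.
From mathcomp Require Import ring.
Import Order.TTheory GRing.Theory Num.Theory.
Local Open Scope ring_scope.

(* Summing the MLPPR system over i and using e^T v = 1 gives
   (e^T y)^(k-1) - alpha e^T (Pbar y^(k-1)) = 1.  The correction term of
   stoch_fix contributes v_i ((e^T y)^(k-1) - e^T (Pbar y^(k-1))) to P y^(k-1),
   so multiplying v_i by that 1 turns the MLPPR equation into the MPR one. *)

Lemma sum_ffun_prod (R : comNzSemiRingType) (m n : nat) (y : 'I_n -> R) :
  \sum_(idx : {ffun 'I_m -> 'I_n}) \prod_(j < m) y (idx j) = (\sum_(i < n) y i) ^+ m.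
Proof.
by rewrite -(bigA_distr_bigA (fun _ : 'I_m => y)) prodr_const card_ord.
Qed.

Lemma tapply_stoch_fix (R : numFieldType) (k n : nat) (Pb : tensor R k n)
    (v y : 'I_n -> R) (i : 'I_n) :
  tapply (stoch_fix Pb v) y i =
    tapply Pb y i + v i * (esum y ^+ k.-1 - \sum_(l < n) tapply Pb y l).
Proof.
rewrite /tapply /stoch_fix; under eq_bigr => idx _ do rewrite mulrDl.
rewrite big_split /= -sum_ffun_prod exchange_big /= -sumrB big_distrr /=.
congr (_ + _); apply: eq_bigr => idx _.
by rewrite -big_distrl /= -mulrA mulrBl mul1r.
Qed.

Lemma mlppr_mass_balance {R : numFieldType} {k n : nat} {Pb : tensor R k n}
    {v y : 'I_n -> R} {alpha : R} :
  (2 <= k)%N -> \sum_(i < n) v i = 1 ->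
  (forall i, esum y ^+ (k - 2) * y i - alpha * tapply Pb y i = v i) ->
  esum y ^+ k.-1 - alpha * \sum_(l < n) tapply Pb y l = 1.
Proof.
move=> hk <- hy; under [RHS]eq_bigr => l _ do rewrite -hy.
have -> : k.-1 = (k - 2).+1 by rewrite -subn1 -subSn // subSS.
by rewrite sumrB -big_distrr exprSr -mulr_sumr.
Qed.

Theorem lemma3p14 (R : realFieldType) (k n : nat) (hk : (2 <= k)%N) (hn : (1 <= n)%N)
  (Pb : tensor R k n) (v : 'I_n -> R) (alpha : R)
  (hPb : col_substochastic Pb) (hv : stochastic v)
  (ha0 : 0 <= alpha) (ha1 : alpha < 1)
  (y : 'I_n -> R) (hy0 : forall i, 0 <= y i)
  (hy : forall i, esum y ^+ (k - 2) * y i - alpha * tapply Pb y i = v i) :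
  (forall i, 0 <= y i) /\
  forall i, y i * esum y ^+ (k - 2) =
    alpha * tapply (stoch_fix Pb v) y i + (1 - alpha) * v i * esum y ^+ (k - 1).
Proof.
split=> // i; rewrite tapply_stoch_fix subn1.
have hyi : y i * esum y ^+ (k - 2) = v i + alpha * tapply Pb y i.
  by rewrite -hy subrK mulrC.
have hvi : v i = v i * (esum y ^+ k.-1 - alpha * \sum_(l < n) tapply Pb y l).
  by rewrite (mlppr_mass_balance hk hv.2 hy) mulr1.
by rewrite hyi {1}hvi; ring.
Qed.
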